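(* Let $F$ be a positive integer and $S\in\mathrm{Sat}(F)$. Then for every integer $g$ with $\mathrm{g}(S)\le g\le F$ there exists $T\in\mathrm{Sat}(F)$ with $\mathrm{g}(T)=g$.
   Context: A numerical semigroup is a subset $S\subseteq\mathbb{N}$ closed under addition, containing $0$, with $\mathbb{N}\setminus S$ finite. Its genus $\mathrm{g}(S)$ is the cardinality of $\mathbb{N}\setminus S$, and its Frobenius number $\mathrm{F}(S)$ is the largest integer not in $S$. For $A\subseteq\mathbb{N}$ and $a\in A$, let $\mathrm{d}_A(a)=\gcd\{x\in A\mid x\le a\}$. A numerical semigroup $S$ is saturated if $s+\mathrm{d}_S(s)\in S$ for all $s\in S\setminus\{0\}$. For a positive integer $F$, $\mathrm{Sat}(F)$ denotes the set of all saturated numerical semigroups $S$ with $\mathrm{F}(S)=F$. *)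

From mathcomp Require Import all_boot.

Definition numerical_semigroup (S : pred nat) : Prop :=
  [/\ S 0,
      (forall x y, S x -> S y -> S (x + y)) &
      exists N, forall n, N <= n -> S n].

Definition is_frobenius (S : pred nat) (F : nat) : Prop :=
  ~~ S F /\ forall n, F < n -> S n.

Definition is_genus (S : pred nat) (g : nat) : Prop :=
  exists N, (forall n, N <= n -> S n) /\ count (predC S) (iota 0 N) = g.

Definition dA (A : pred nat) (a : nat) : nat :=
  foldr gcdn 0 [seq x <- iota 0 a.+1 | A x].

Definition saturated (S : pred nat) : Prop :=
  numerical_semigroup S /\
  forall s, S s -> 0 < s -> S (s + dA S s).

Definition in_Sat (F : nat) (S : pred nat) : Prop :=
  saturated S /\ is_frobenius S F.

From mathcomp Require Import all_boot.
From mathcomp Require Import zify.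

(* Let S be in Sat(F) and let s be its largest element in (0, F].  Saturation
   puts s + d_S(s) in S, so s + d_S(s) > F; hence d := d_S(s) does not divide
   F, and d divides every element of S in (0, F].  (If S has no element in
   (0, F], take d := F + 1.)  Consequently S has at most q := F %/ d elements
   in [1, F], i.e. g(S) >= F - q.

   Conversely, for any d not dividing F and any threshold m, the set
     {0} u {multiples of d that are >= m} u (F, oo)
   is a saturated numerical semigroup with Frobenius number F: below F every
   element is a multiple of d, so d divides d_T(s), and adding d_T(s) stays on
   the ladder of multiples of d.  With m = d * j it has exactly q + 1 - j
   elements in [1, F], so choosing j realises every genus between F - q and
   F.  Both directions measure genera through one identity: for a set
   containing 0 with Frobenius number F, the genus is F minus the number of
   its elements in [1, F]. *)

Lemma dA_dvd {A : pred nat} {a x : nat} : A x -> x <= a -> dA A a %| x.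
Proof.
rewrite /dA => Ax xa.
have : x \in [seq y <- iota 0 a.+1 | A y] by rewrite mem_filter Ax mem_iota.
elim: [seq y <- _ | _] => //= y l IH; rewrite in_cons => /orP [/eqP <- | /IH].
- exact: dvdn_gcdl.
- exact: dvdn_trans (dvdn_gcdr _ _).
Qed.

Lemma dvd_dA (A : pred nat) a d :
  (forall x, A x -> x <= a -> d %| x) -> d %| dA A a.
Proof.
move=> common; rewrite /dA.
have : forall x, x \in [seq y <- iota 0 a.+1 | A y] -> d %| x.
  by move=> x; rewrite mem_filter mem_iota => /andP [Ax /andP [_ xa]]; apply: common.
elim: [seq y <- _ | _] => [|y l IH] Hl /=; first exact: dvdn0.
rewrite dvdn_gcd Hl ?mem_head //=; apply: IH => x xl.
by apply: Hl; rewrite in_cons xl orbT.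
Qed.

Lemma dA_gt0 {A : pred nat} {a : nat} : A a -> 0 < a -> 0 < dA A a.
Proof.
move=> Aa a0; have := dA_dvd Aa (leqnn a).
by case: (dA A a) => //; rewrite dvd0n => /eqP a_eq0; rewrite a_eq0 in a0.
Qed.

(* For a set containing 0 with Frobenius number F, the gaps are exactly the
   elements of [0, F] not in the set, and these together with the elements of
   the set in [1, F] make up F numbers. *)
Lemma gaps_below_frobenius {S : pred nat} {F N : nat} :
  S 0 -> is_frobenius S F -> (forall n, N <= n -> S n) ->
  count (predC S) (iota 0 N) + count S (iota 1 F) = F.
Proof.
move=> S0 [nSF SF] SN.
have FN : F < N by rewrite ltnNge; apply: contra nSF => /SN.
have no_gap_above : count (predC S) (iota F.+1 (N - F.+1)) = 0.
  by apply/eqP; rewrite eqn0Ngt -has_count; apply/hasPn => x;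
    rewrite mem_iota /= => /andP [/SF ->].
rewrite -(subnKC FN) iotaD count_cat add0n no_gap_above addn0.
have := count_predC S (iota 0 F.+1); rewrite size_iota /= S0 /=; lia.
Qed.

Lemma genus_count {S : pred nat} {F g : nat} :
  S 0 -> is_frobenius S F -> is_genus S g -> g + count S (iota 1 F) = F.
Proof. by move=> S0 frobS [N [SN <-]]; apply: gaps_below_frobenius SN. Qed.

Lemma genus_of_count (S : pred nat) F :
  S 0 -> is_frobenius S F -> is_genus S (F - count S (iota 1 F)).
Proof.
move=> S0 frobS; exists F.+1; split; first by move=> n; apply: frobS.2.
have := gaps_below_frobenius S0 frobS (fun n => frobS.2 n); lia.
Qed.

Lemma sat_small_elements_divisor (F : nat) (S : pred nat) :
  0 < F -> in_Sat F S ->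
  exists d, [/\ 0 < d, ~~ (d %| F) & forall x, S x -> 0 < x <= F -> d %| x].
Proof.
move=> F0 [[[_ _ _] Ssat] [nSF _]].
pose P x := S x && (0 < x <= F).
have [/hasP [x _ Px] | /hasPn noP] := boolP (has P (iota 1 F)); last first.
  exists F.+1; split => //; first by apply/negP => /(dvdn_leq F0); rewrite ltnn.
  move=> x Sx xF; have /noP : x \in iota 1 F by rewrite mem_iota; lia.
  by rewrite /P Sx xF.
have ubP y : P y -> y <= F by case/andP => _ /andP [].
case: (ex_maxnP (ex_intro P x Px) ubP) => s /andP [Ss /andP [s0 sF]] smax.
have s_ltF : s < F by rewrite ltn_neqAle sF andbT; apply: contraNneq nSF => <-.
have d0 := dA_gt0 Ss s0.
have ds : dA S s %| s := dA_dvd Ss (leqnn s).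
exists (dA S s); split => //; last first.
  by move=> y Sy yF; apply: dA_dvd => //; apply: smax; rewrite /P Sy.
apply/negP => dF.
have : dA S s <= F - s by apply: dvdn_leq; [lia | apply: dvdn_sub].
have : ~~ P (s + dA S s) by apply/negP => /smax; lia.
by rewrite /P Ssat //; lia.
Qed.

Lemma count_multiples_from d j n : 0 < d -> 0 < j ->
  count (fun x => (d * j <= x) && (d %| x)) (iota 1 n) = n %/ d - j.-1.
Proof.
move=> d0 j0; elim: n => [|n IH]; first by rewrite div0n.
rewrite -[n.+1]addn1 iotaD count_cat IH /= addn0 add1n addn1 (divnS _ d0).
have [dn | ndn] := boolP (d %| n.+1); last by rewrite andbF addn0 add0n.
have [t et] := dvdnP dn.
have step_le : (d * j <= n.+1) = (j <= t) by rewrite et mulnC leq_pmul2r.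
have step_div : n.+1 %/ d = t by rewrite et mulnK.
move: step_div; rewrite (divnS _ d0) dn step_le andbT; lia.
Qed.

Definition ladder (F d m : nat) : pred nat :=
  fun x => [|| x == 0, F < x | (m <= x) && (d %| x)].

Lemma ladder_above F d m x : F < x -> ladder F d m x.
Proof. by move=> Fx; rewrite /ladder Fx orbT. Qed.

Lemma ladder_add F d m x y :
  ladder F d m x -> ladder F d m y -> ladder F d m (x + y).
Proof.
case/or3P => [/eqP -> | Fx | /andP [mx dx]]; first by rewrite add0n.
  by move=> _; apply: ladder_above; apply: leq_trans (leq_addr _ _).
case/or3P => [/eqP -> | Fy | /andP [_ dy]]; first by rewrite addn0 /ladder mx dx !orbT.
  by apply: ladder_above; apply: leq_trans (leq_addl _ _).
by rewrite /ladder (leq_trans mx (leq_addr _ _)) dvdn_add // !orbT.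
Qed.

Lemma ladder_dvd F d m x : ladder F d m x -> x <= F -> d %| x.
Proof. by case/or3P => [/eqP -> | Fx | /andP [_ dx]] //; rewrite leqNgt Fx. Qed.

(* If d does not divide F, the ladder lies in Sat(F): below F, d divides
   d_T(s), so s + d_T(s) is again a rung of the ladder. *)
Lemma ladder_in_Sat F d m : ~~ (d %| F) -> in_Sat F (ladder F d m).
Proof.
move=> ndF; split; last first.
  split; last by move=> n; apply: ladder_above.
  apply: contra ndF => /or3P [/eqP -> | | /andP [_ //]]; last by rewrite ltnn.
  exact: dvdn0.
split.
  split; [by rewrite /ladder eqxx | exact: ladder_add | by exists F.+1 => n /ladder_above].
move=> s Ts s0; have [Fs | sF] := ltnP F s.
  by apply: ladder_above; apply: leq_trans (leq_addr _ _).
have ddA : d %| dA (ladder F d m) s.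
  by apply: dvd_dA => x Tx xs; apply: ladder_dvd Tx (leq_trans xs sF).
case/or3P: Ts => [/eqP s_eq0 | Fs | /andP [ms ds]]; first by rewrite s_eq0 in s0.
  by rewrite ltnNge sF in Fs.
by rewrite /ladder (leq_trans ms (leq_addr _ _)) dvdn_add // !orbT.
Qed.

Lemma count_ladder F d j : 0 < d -> 0 < j ->
  count (ladder F d (d * j)) (iota 1 F) = F %/ d - j.-1.
Proof.
move=> d0 j0; rewrite -(count_multiples_from _ _ F d0 j0).
apply: eq_in_count => x; rewrite mem_iota => /andP [x0 xF].
by rewrite /ladder (negbTE (lt0n_neq0 x0)) ltnNge -ltnS xF.
Qed.

Lemma count_le_multiples (S : pred nat) F d : 0 < d ->
  (forall x, S x -> 0 < x <= F -> d %| x) -> count S (iota 1 F) <= F %/ d.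
Proof.
move=> d0 Sd; rewrite -[F %/ d]subn0 -(count_multiples_from _ _ F d0 (ltn0Sn 0)).
rewrite (@eq_in_count _ _ (fun x => S x && ((d * 1 <= x) && (d %| x)))); last first.
  move=> x; rewrite mem_iota => xF; case Sx: (S x) => //=.
  have dx : d %| x by apply: Sd; lia.
  by rewrite muln1 dx (dvdn_leq _ dx) //; lia.
by apply: sub_count => x /andP [].
Qed.

Theorem lemma27 (F : nat) (S : pred nat) (gS : nat) :
  0 < F -> in_Sat F S -> is_genus S gS ->
  forall g : nat, gS <= g <= F ->
  exists T : pred nat, in_Sat F T /\ is_genus T g.
Proof.
move=> F0 SatS genS g /andP [gS_le_g g_le_F].
have [[[S0 _ _] _] frobS] := SatS.
have [d [d0 ndF Sd]] := sat_small_elements_divisor F S F0 SatS.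
have elemsS_le := count_le_multiples S F d d0 Sd.
have genusS := genus_count S0 frobS genS.
(* The ladder keeps the top F - g multiples of d below F. *)
pose j := (F %/ d - (F - g)).+1.
have [[[T0 _ _] _] frobT] := ladder_in_Sat F d (d * j) ndF.
exists (ladder F d (d * j)); split; first exact: ladder_in_Sat.
have -> : g = F - count (ladder F d (d * j)) (iota 1 F).
  by rewrite count_ladder //=; lia.
exact: genus_of_count.
Qed.
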